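(* Let $E\ge 1$ and for each environment $e=1,\dots,E$ let $p_e(x,y)$ be a (known, positive) joint density of a feature vector $x\in\mathbb{R}^p$ and outcome $y$. Let $p(z)$ be a prior on $\{0,1\}^p$. Consider the model (BIP) for data $\mathcal{D}=\{\{(x_{ei},y_{ei})\}_{i=1}^{n_e}\}_{e=1}^E$ with joint distribution $$p(z,\mathcal{D})=p(z)\prod_{e=1}^E\prod_{i=1}^{n_e}p_e(x_{ei}^z)\,g(y_{ei}\mid x_{ei}^z)\,p_e(x_{ei}^{-z}\mid x_{ei}^z,y_{ei}).$$ Then the posterior distribution satisfies $$p(z\mid\mathcal{D})\propto p(z)\prod_{e=1}^E\prod_{i=1}^{n_e}\frac{g(y_{ei}\mid x_{ei}^z)}{p_e(y_{ei}\mid x_{ei}^z)},$$ where the proportionality constant does not depend on $z$.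
   Context: For $z\in\{0,1\}^p$, $x^z$ is the subvector of $x$ with coordinates $j$ such that $z^{(j)}=1$, and $x^{-z}$ is the subvector of the remaining coordinates. The densities $p_e(x^z)$, $p_e(y\mid x^z)$ and $p_e(x^{-z}\mid x^z,y)$ are the marginal and conditionals derived from $p_e(x,y)$. The pooled conditional is $g(y\mid x^z):=\frac{\sum_{e=1}^E\int p_e(x,y)\,\mathrm{d}x^{-z}}{\sum_{e=1}^E p_e(x^z)}$. *)

From HB Require Import structures.
From mathcomp Require Import all_boot all_order all_algebra.
From mathcomp Require Import all_classical all_reals all_analysis.
Set Implicit Arguments. Unset Strict Implicit. Unset Printing Implicit Defensive.
Import Order.TTheory GRing.Theory Num.Theory.
Local Open Scope ring_scope.

(* The joint density of environment e is pe e : ('I_p -> R) -> R -> R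
   (density w.r.t. Lebesgue measure on R^p x R). *)

Definition upd (R : realType) (p : nat) (x : 'I_p -> R) (j : 'I_p) (t : R) : 'I_p -> R :=
  fun i => if i == j then t else x i.

Fixpoint iint (R : realType) (p : nat) (s : seq 'I_p)
    (f : ('I_p -> R) -> \bar R) (x : 'I_p -> R) : \bar R :=
  match s with
  | [::] => f x
  | j :: s' => (\int[@lebesgue_measure R]_t iint s' f (upd x j t))%E
  end.

Definition offz (p : nat) (z : {ffun 'I_p -> bool}) : seq 'I_p :=
  [seq j <- enum 'I_p | ~~ z j].

Section BIP.
Variables (R : realType) (p E : nat) (pe : 'I_E -> ('I_p -> R) -> R -> R).

(* p_e(x^z, y) = \int p_e(x,y) dx^{-z}  (depends on x only through x^z) *)
Definition marg_xy (e : 'I_E) (z : {ffun 'I_p -> bool}) (x : 'I_p -> R) (y : R) : R :=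
  fine (iint (offz z) (fun x' => (pe e x' y)%:E) x).

Definition marg_x (e : 'I_E) (z : {ffun 'I_p -> bool}) (x : 'I_p -> R) : R :=
  fine (\int[@lebesgue_measure R]_y iint (offz z) (fun x' => (pe e x' y)%:E) x)%E.

Definition cond_y (e : 'I_E) z x y : R := marg_xy e z x y / marg_x e z x.

Definition cond_rest (e : 'I_E) z x y : R := pe e x y / marg_xy e z x y.

(* pooled conditional g(y | x^z) *)
Definition gpool z x y : R :=
  (\sum_(e < E) marg_xy e z x y) / (\sum_(e < E) marg_x e z x).

Definition bip_joint (prior : {ffun 'I_p -> bool} -> R) (n : 'I_E -> nat)
    (X : forall e : 'I_E, 'I_(n e) -> ('I_p -> R)) (Y : forall e : 'I_E, 'I_(n e) -> R)
    (z : {ffun 'I_p -> bool}) : R :=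
  prior z * \prod_(e < E) \prod_(i < n e)
     (marg_x e z (X e i) * gpool z (X e i) (Y e i) * cond_rest e z (X e i) (Y e i)).

Definition bip_posterior (prior : {ffun 'I_p -> bool} -> R) (n : 'I_E -> nat)
    (X : forall e : 'I_E, 'I_(n e) -> ('I_p -> R)) (Y : forall e : 'I_E, 'I_(n e) -> R)
    (z : {ffun 'I_p -> bool}) : R :=
  bip_joint prior X Y z / \sum_(z' : {ffun 'I_p -> bool}) bip_joint prior X Y z'.

End BIP.

From HB Require Import structures.
From mathcomp Require Import all_boot all_order all_algebra.
From mathcomp Require Import all_classical all_reals all_analysis.
From mathcomp Require Import ring.
Import Order.TTheory GRing.Theory Num.Theory.
Local Open Scope ring_scope.

(* Since p_e(x^z) p_e(y | x^z) p_e(x^{-z} | x^z, y) = p_e(x, y), each factor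
   p_e(x^z) g(y | x^z) p_e(x^{-z} | x^z, y) of the joint equals
   g(y | x^z) / p_e(y | x^z) times p_e(x, y).  The product of the p_e(x, y)
   over the data does not depend on z and is absorbed, together with the
   evidence, into the proportionality constant. *)

(* No side conditions are needed: with total inversion, (b / a)^-1 = a / b
   even when a or b is 0. *)
Lemma mulr_marg_cond (F : fieldType) (mx mxy g q : F) :
  mx * g * (q / mxy) = g / (mxy / mx) * q.
Proof. by rewrite invfM invrK; ring. Qed.

Section BIPFactorization.
Variables (R : realType) (p E : nat) (pe : 'I_E -> ('I_p -> R) -> R -> R).
Variables (n : 'I_E -> nat) (X : forall e : 'I_E, 'I_(n e) -> ('I_p -> R))
  (Y : forall e : 'I_E, 'I_(n e) -> R).

Definition likelihood : R := \prod_(e < E) \prod_(i < n e) pe e (X e i) (Y e i).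

Definition pooling_ratio (z : {ffun 'I_p -> bool}) : R :=
  \prod_(e < E) \prod_(i < n e) (gpool pe z (X e i) (Y e i) / cond_y pe e z (X e i) (Y e i)).

Lemma likelihood_gt0 : (forall e x y, 0 < pe e x y) -> 0 < likelihood.
Proof.
by move=> pe_pos; apply: prodr_gt0 => e _; apply: prodr_gt0 => i _; apply: pe_pos.
Qed.

Lemma bip_jointE prior z :
  bip_joint pe prior X Y z = prior z * pooling_ratio z * likelihood.
Proof.
rewrite /bip_joint /pooling_ratio /likelihood -mulrA -big_split /=.
congr (_ * _); apply: eq_bigr => e _; rewrite -big_split /=.
by apply: eq_bigr => i _; rewrite /cond_y /cond_rest mulr_marg_cond.
Qed.

End BIPFactorization.

Arguments likelihood {R p E} pe {n} X Y.
Arguments pooling_ratio {R p E} pe {n} X Y z.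

Theorem proposition2 (R : realType) (p E : nat) (hE : (0 < E)%N)
  (pe : 'I_E -> ('I_p -> R) -> R -> R)
  (pe_pos : forall e x y, 0 < pe e x y)
  (pe_dens : forall e (x0 : 'I_p -> R),
     (\int[@lebesgue_measure R]_y iint (enum 'I_p) (fun x => (pe e x y)%:E) x0)%E = 1%E)
  (prior : {ffun 'I_p -> bool} -> R)
  (prior_ge0 : forall z, 0 <= prior z)
  (prior_sum1 : \sum_(z : {ffun 'I_p -> bool}) prior z = 1)
  (n : 'I_E -> nat)
  (X : forall e : 'I_E, 'I_(n e) -> ('I_p -> R))
  (Y : forall e : 'I_E, 'I_(n e) -> R)
  (evidence_pos : 0 < \sum_(z : {ffun 'I_p -> bool}) bip_joint pe prior X Y z) :
  exists C : R, 0 < C /\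
    forall z : {ffun 'I_p -> bool},
      bip_posterior pe prior X Y z =
        C * (prior z * \prod_(e < E) \prod_(i < n e)
               (gpool pe z (X e i) (Y e i) / cond_y pe e z (X e i) (Y e i))).
Proof.
set evidence := \sum_(z : {ffun 'I_p -> bool}) bip_joint pe prior X Y z.
exists (likelihood pe X Y / evidence); split.
  by rewrite divr_gt0 // likelihood_gt0.
move=> z; rewrite /bip_posterior -/evidence bip_jointE.
by rewrite -mulrA mulrC.
Qed.
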